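(* Any naturally ordered compact Hausdorff topological semiring $R$ is bounded, i.e., the partially ordered set $(R,\le)$ has a greatest element.
   Context: A semiring is an algebra $(R,+,\cdot,0)$ such that $(R,+,0)$ is a commutative monoid, $(R,\cdot)$ is a semigroup (no multiplicative identity is required), multiplication distributes over addition on both sides, and $0\cdot x = x\cdot 0 = 0$ for all $x\in R$. A topological semiring is a semiring with a topology in which addition and multiplication are continuous. On $R$ define $x\le y$ iff there is $z\in R$ with $x+z=y$; $R$ is naturally ordered if this preorder is antisymmetric. *)

From HB Require Import structures.
From mathcomp Require Import all_boot all_order.
From mathcomp Require Import all_classical topology.
Set Implicit Arguments. Unset Strict Implicit. Unset Printing Implicit Defensive.

(* Semiring in the sense of the paper: (R,+,0) commutative monoid,
   (R,.) semigroup (no unit required), two-sided distributivity, 0 absorbing. *)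
Definition is_semiring (R : Type) (add mul : R -> R -> R) (zero : R) : Prop :=
  (forall x y z, add x (add y z) = add (add x y) z) /\
  (forall x y, add x y = add y x) /\
  (forall x, add zero x = x) /\
  (forall x y z, mul x (mul y z) = mul (mul x y) z) /\
  (forall x y z, mul x (add y z) = add (mul x y) (mul x z)) /\
  (forall x y z, mul (add x y) z = add (mul x z) (mul y z)) /\
  (forall x, mul zero x = zero /\ mul x zero = zero).

Definition is_topological_semiring (R : topologicalType)
    (add mul : R -> R -> R) (zero : R) : Prop :=
  [/\ is_semiring add mul zero,
      continuous (fun p : R * R => add p.1 p.2) &
      continuous (fun p : R * R => mul p.1 p.2)].

Definition sr_le (R : Type) (add : R -> R -> R) (x y : R) : Prop :=
  exists z, add x z = y.

Definition naturally_ordered (R : Type) (add : R -> R -> R) : Prop :=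
  forall x y, sr_le add x y -> sr_le add y x -> x = y.

(* The principal up-sets [x + R] are closed, being continuous images of the
   compact space [R] in a Hausdorff space, and they form a filter base since
   [x + y + R] lies in both [x + R] and [y + R]. By compactness this base has a
   cluster point, which then lies in every [x + R], i.e. above every [x]. *)
From HB Require Import structures.
From mathcomp Require Import all_boot all_order.
From mathcomp Require Import all_classical topology.

Local Open Scope classical_set_scope.

Section CommutativeTopologicalMonoid.
Variables (R : topologicalType) (add : R -> R -> R) (zero : R).
Hypothesis addA : forall x y z, add x (add y z) = add (add x y) z.
Hypothesis addC : forall x y, add x y = add y x.
Hypothesis add0 : forall x, add zero x = x.
Hypothesis add_continuous : continuous (fun p : R * R => add p.1 p.2).

Lemma sr_le_refl x : sr_le add x x.
Proof. by exists zero; rewrite addC add0. Qed.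

Lemma sr_le_trans x y z : sr_le add x y -> sr_le add y z -> sr_le add x z.
Proof. by move=> [u <-] [v <-]; exists (add u v); rewrite addA. Qed.

Lemma sr_le_addr x y : sr_le add x (add x y).
Proof. by exists y. Qed.

Lemma sr_le_addl x y : sr_le add y (add x y).
Proof. by rewrite addC; apply: sr_le_addr. Qed.

Lemma sr_leE x : sr_le add x = add x @` [set: R].
Proof.
by rewrite predeqE => y; split=> [[z <-]|[z _ <-]]; [exists z|exists z].
Qed.

Lemma continuous_addl x : continuous (add x).
Proof.
move=> y; have -> : add x = (fun p : R * R => add p.1 p.2) \o pair x by [].
apply: continuous_comp; last exact: add_continuous.
by apply: cvg_pair; [exact: cvg_cst | exact: cvg_id].
Qed.

Lemma closed_sr_le x :
  compact [set: R] -> hausdorff_space R -> closed (sr_le add x).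
Proof.
move=> Rcompact Rhausdorff; rewrite sr_leE; apply: compact_closed => //.
apply: continuous_compact => //; apply: continuous_subspaceT.
exact: continuous_addl.
Qed.

Lemma sr_le_filter_proper :
  ProperFilter (filter_from [set: R] (sr_le add)).
Proof.
apply: filter_from_proper; last by move=> x _; exists x; apply: sr_le_refl.
apply: filter_fromT_filter; first by exists zero.
move=> x y; exists (add x y) => z xy_le_z; split.
- exact: sr_le_trans (sr_le_addr x y) xy_le_z.
- exact: sr_le_trans (sr_le_addl x y) xy_le_z.
Qed.

Lemma sr_le_top_exists :
  compact [set: R] -> hausdorff_space R ->
  exists top : R, forall x : R, sr_le add x top.
Proof.
move=> Rcompact Rhausdorff.
have [top [_ top_cluster]] :=
  Rcompact _ sr_le_filter_proper (@filterT _ _ sr_le_filter_proper).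
exists top => x; apply: (closed_sr_le x Rcompact Rhausdorff) => B Btop.
by apply: (top_cluster (sr_le add x) B) => //; exists x.
Qed.

End CommutativeTopologicalMonoid.

Theorem corollary3p5 (R : topologicalType) (add mul : R -> R -> R) (zero : R) :
  is_topological_semiring add mul zero ->
  naturally_ordered add ->
  compact [set: R]%classic ->
  hausdorff_space R ->
  exists top : R, forall x : R, sr_le add x top.
Proof.
move=> [[addA [addC [add0 _]]] add_continuous _] _.
exact: sr_le_top_exists addA addC add0 add_continuous.
Qed.
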